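(* Under Assumptions (M), (P) and (L), there exists a deterministic constant $L_h'$ such that $\|h(w_1)-h(w_2)\|\le L_h'\|w_1-w_2\|$ for all $w_1,w_2\in\mathbb R^d$.
   Context: Let $\langle\cdot,\cdot\rangle$ be an inner product on $\mathbb R^d$ with induced norm $\|\cdot\|$. Let $\mathcal Y$ be a finite set and $H:\mathbb R^d\times\mathcal Y\to\mathbb R^d$. (M) There is a family $\{P_w:w\in\mathbb R^d\}$ of $|\mathcal Y|\times|\mathcal Y|$ stochastic matrices such that for every $P$ in the closure of this family, the time-homogeneous Markov chain with transition matrix $P$ is irreducible and aperiodic. Then each $P_w$ has a unique stationary distribution $d_{\mathcal Y,w}$; define $h(w)\doteq\sum_{y\in\mathcal Y}d_{\mathcal Y,w}(y)H(w,y)$. (P) There is a constant $C_P$ such that $\|P_{w_1}-P_{w_2}\|\le\frac{C_P}{1+\|w_1\|+\|w_2\|}\|w_1-w_2\|$ for all $w_1,w_2$ (for a fixed matrix norm). (L) There is a constant $L_h$ with $\|H(w_1,y)-H(w_2,y)\|\le L_h\|w_1-w_2\|$ and $\|H(0,y)\|\le L_h$ for all $w_1,w_2,y$. *)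

From HB Require Import structures.
From mathcomp Require Import all_boot all_order all_algebra.
From mathcomp Require Import reals.
From Stdlib Require Import ClassicalEpsilon.
Set Implicit Arguments. Unset Strict Implicit. Unset Printing Implicit Defensive.
Import Order.TTheory GRing.Theory Num.Theory.
Local Open Scope ring_scope.

Section Defs.
Variables (R : realType) (Y : finType).

Definition ymat := Y -> Y -> R.

Definition ymul (A B : ymat) : ymat := fun x z => \sum_(y : Y) A x y * B y z.

Fixpoint ypow (A : ymat) (n : nat) : ymat :=
  match n with
  | 0 => fun x y => (x == y)%:R
  | n.+1 => ymul (ypow A n) A
  end.

Definition ysub (A B : ymat) : ymat := fun x y => A x y - B x y.

Definition stochastic (P : ymat) : Prop :=
  (forall x y, 0 <= P x y) /\ (forall x, \sum_(y : Y) P x y = 1).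

Definition irreducible (P : ymat) : Prop :=
  forall x y, exists n : nat, 0 < ypow P n x y.

(* every state has period 1: the only common divisor of the return times
   {n >= 1 : P^n(x,x) > 0} is 1, i.e. their gcd is 1 *)
Definition aperiodic (P : ymat) : Prop :=
  forall x : Y, forall k : nat,
    (forall n : nat, (0 < n)%N -> 0 < ypow P n x x -> (k %| n)%N) -> k = 1%N.

(* P lies in the closure of the family {Pw w} (entrywise / any norm topology) *)
Definition in_closure (V : Type) (Pw : V -> ymat) (P : ymat) : Prop :=
  forall e : R, 0 < e -> exists w, forall x y, `|Pw w x y - P x y| < e.

Definition is_stationary (P : ymat) (d : Y -> R) : Prop :=
  (forall y, 0 <= d y) /\ \sum_(y : Y) d y = 1 /\
  (forall z, \sum_(y : Y) d y * P y z = d z).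

(* the (unique, under (M)) stationary distribution, chosen by epsilon *)
Definition stat_dist (P : ymat) : Y -> R :=
  epsilon (inhabits (fun _ => 0)) (fun d => is_stationary P d).

Definition matrix_norm (mn : ymat -> R) : Prop :=
  (forall A, 0 <= mn A) /\
  (forall A, mn A = 0 -> forall x y, A x y = 0) /\
  (forall (c : R) A, mn (fun x y => c * A x y) = `|c| * mn A) /\
  (forall A B, mn (fun x y => A x y + B x y) <= mn A + mn B).

End Defs.

Section IP.
Variables (R : realType) (d : nat).

Definition inner_product (ip : 'rV[R]_d -> 'rV[R]_d -> R) : Prop :=
  (forall x y, ip x y = ip y x) /\
  (forall x y z, ip (x + y) z = ip x z + ip y z) /\
  (forall (c : R) x y, ip (c *: x) y = c * ip x y) /\
  (forall x, x != 0 -> 0 < ip x x).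

Definition ipnorm (ip : 'rV[R]_d -> 'rV[R]_d -> R) (x : 'rV[R]_d) : R :=
  Num.sqrt (ip x x).

End IP.

Definition hmean (R : realType) (Y : finType) (d : nat)
  (Pw : 'rV[R]_d -> ymat R Y) (H : 'rV[R]_d -> Y -> 'rV[R]_d) (w : 'rV[R]_d)
  : 'rV[R]_d :=
  \sum_(y : Y) stat_dist (Pw w) y *: H w y.

From HB Require Import structures.
From mathcomp Require Import all_boot all_order all_algebra.
From mathcomp Require Import reals.
From mathcomp Require Import all_classical all_reals all_analysis.
From Stdlib Require Import ClassicalEpsilon.
From mathcomp Require Import lra ring.
Set Implicit Arguments. Unset Strict Implicit. Unset Printing Implicit Defensive.
Import Order.TTheory GRing.Theory Num.Theory.
Import numFieldNormedType.Exports.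
Local Open Scope ring_scope.

(* Write [h w1 - h w2] as [\sum_y d1 y *: (H w1 y - H w2 y) + \sum_y (d1 y - d2 y) *: H w2 y].
   The first term is at most [L_h |w1 - w2|], and [|H w2 y| <= L_h (1 + |w2|)].  The difference
   [x := d1 - d2] of the stationary distributions satisfies [x - x P2 = d1 (P1 - P2)] and
   [\sum x = 0].  No irreducible matrix in the closure of the family fixes a nonzero zero-sum
   vector, so by compactness there is a uniform [c > 0] with [c |x|_1 <= |x - x P|_1 + |\sum x|]
   for every [P] of the family.  Together with the equivalence of norms on matrices this gives
   [|d1 - d2|_1 <= K C_P |w1 - w2| / (1 + |w1| + |w2|)], and the damping factor absorbs the
   linear growth of [H]. *)

Section StochasticMatrix.
Variables (R : realType) (Y : finType).
Implicit Types (P Q : ymat R Y) (x : Y -> R).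

Definition fix_defect P x : R :=
  \sum_z `|x z - \sum_y x y * P y z| + `|\sum_y x y|.

Lemma fix_defect_ge0 P x : 0 <= fix_defect P x.
Proof. by rewrite addr_ge0 ?sumr_ge0. Qed.

Lemma fix_defectZ P x k : fix_defect P (fun y => k * x y) = `|k| * fix_defect P x.
Proof.
rewrite /fix_defect mulrDr -mulr_sumr normrM mulr_sumr; congr (_ + _).
apply: eq_bigr => z _; rewrite -normrM mulrBr mulr_sumr.
by congr `|_ - _|; apply: eq_bigr => y _; rewrite mulrA.
Qed.

Lemma stochastic_le1 P y z : stochastic P -> P y z <= 1.
Proof. by move=> [P0 P1]; rewrite -(P1 y) (bigD1 z) //= lerDl sumr_ge0. Qed.

Lemma ypow_ge0 P : (forall y z, 0 <= P y z) -> forall n y z, 0 <= ypow P n y z.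
Proof.
move=> P0; elim=> [|n IHn] y z /=; first by rewrite ler0n.
by apply: sumr_ge0 => u _; rewrite mulr_ge0.
Qed.

Lemma fix_ypow P x : (forall z, \sum_y x y * P y z = x z) ->
  forall n z, \sum_y x y * ypow P n y z = x z.
Proof.
move=> fx; elim=> [|n IHn] z /=.
  rewrite (bigD1 z) //= eqxx mulr1 big1 ?addr0 // => y /negbTE yz.
  by rewrite yz mulr0.
rewrite /ymul -[RHS]fx; under eq_bigr => y _ do rewrite mulr_sumr.
rewrite exchange_big /=; apply: eq_bigr => u _.
by rewrite -IHn mulr_suml; apply: eq_bigr => y _; rewrite mulrA.
Qed.

(* Equality holds in the triangle inequality because both sides have the same total mass. *)
Lemma stochastic_fix_norm P x : stochastic P ->
  (forall z, \sum_y x y * P y z = x z) -> forall z, \sum_y `|x y| * P y z = `|x z|.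
Proof.
move=> [P0 P1] fx.
have le_norm z : `|x z| <= \sum_y `|x y| * P y z.
  rewrite -{1}fx; apply: le_trans (ler_norm_sum _ _ _) _.
  by apply: ler_sum => y _; rewrite normrM (ger0_norm (P0 _ _)).
have mass : \sum_z (\sum_y `|x y| * P y z - `|x z|) = 0.
  rewrite sumrB exchange_big /=.
  by under eq_bigr => y _ do rewrite -mulr_sumr P1 mulr1; rewrite subrr.
move=> z; apply/eqP; rewrite -subr_eq0; apply/eqP.
by apply: (psumr_eq0P _ mass) => // u _; rewrite subr_ge0.
Qed.

(* The positive part [x + |x|] is again invariant; by irreducibility it is either
   zero or positive everywhere, and a zero-sum [x] leaves only the first case. *)
Lemma irreducible_fix_sum0 P x : stochastic P -> irreducible P ->
  (forall z, \sum_y x y * P y z = x z) -> \sum_y x y = 0 -> forall y, x y = 0.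
Proof.
move=> sP iP fx sx.
pose v y := x y + `|x y|.
have v_ge0 y : 0 <= v y by rewrite /v -lerBlDr sub0r; exact: lerNnormlW.
have fv z : \sum_y v y * P y z = v z.
  under eq_bigr => y _ do rewrite mulrDl.
  by rewrite big_split /= fx stochastic_fix_norm.
have x_pos y : 0 < x y -> forall z, 0 < x z.
  move=> xy z; have [n Pn] := iP y z.
  have : v y * ypow P n y z <= v z.
    rewrite -(fix_ypow fv n z) (bigD1 y) //= lerDl; apply: sumr_ge0 => u _.
    by rewrite mulr_ge0 ?ypow_ge0 //; case: sP.
  have vy : 0 < v y by rewrite /v gtr0_norm // addr_gt0.
  move/(lt_le_trans (mulr_gt0 vy Pn)); rewrite /v.
  by have [xz|//] := leP (x z) 0; rewrite ler0_norm // subrr ltxx.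
have x_le0 y : x y <= 0.
  rewrite leNgt; apply/negP => xy; move: sx; apply/eqP; rewrite gt_eqF //.
  rewrite (bigD1 y) //= ltr_pwDl // sumr_ge0 // => u _.
  exact: ltW (x_pos _ xy u).
have sNx : \sum_y - x y = 0 by rewrite sumrN sx oppr0.
move=> y; apply/eqP; rewrite -oppr_eq0; apply/eqP.
by apply: (psumr_eq0P _ sNx) => // u _; rewrite oppr_ge0.
Qed.

(* [I - P] is singular since [P] fixes the constant vector, so [P^T] has a nonzero fixed vector. *)
Lemma stochastic_fix_exists P : stochastic P -> Y ->
  exists x, (exists y, x y != 0) /\ forall z, \sum_y x y * P y z = x z.
Proof.
move=> [P0 P1] y0.
pose M : 'M[R]_#|Y| := \matrix_(i, j) ((i == j)%:R - P (enum_val i) (enum_val j)).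
have sum_enum (F : Y -> R) : \sum_(i < #|Y|) F (enum_val i) = \sum_y F y.
  rewrite (reindex (@enum_rank Y)) /=; last first.
    by exists enum_val => i _; [rewrite enum_rankK | rewrite enum_valK].
  by apply: eq_bigr => y _; rewrite enum_rankK.
have detM : \det M == 0.
  rewrite -det_tr; apply/det0P; exists (const_mx 1).
    apply/negP => /eqP /matrixP /(_ ord0 (enum_rank y0)) /eqP; rewrite !mxE.
    by rewrite oner_eq0.
  apply/matrixP => i j; rewrite !mxE.
  under eq_bigr => k _ do rewrite !mxE mul1r.
  rewrite sumrB (bigD1 j) //= eqxx big1 ?addr0; last first.
    by move=> k /negbTE; rewrite eq_sym => ->.
  by rewrite (sum_enum (P (enum_val j))) P1 subrr.
have [v v0 vM] := det0P detM.
exists (fun y => v ord0 (enum_rank y)); split.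
  case: (pickP (fun j => v ord0 j != 0)) => [j vj|v_eq0].
    by exists (enum_val j); rewrite enum_valK.
  move/negP: v0; case; apply/eqP/matrixP => i j.
  by rewrite (ord1 i) mxE; move/negbFE/eqP: (v_eq0 j).
move=> z; move/matrixP/(_ ord0 (enum_rank z)): vM; rewrite !mxE.
under eq_bigr => k _ do rewrite mxE mulrBr.
rewrite sumrB (bigD1 (enum_rank z)) //= eqxx mulr1 big1 ?addr0; last first.
  by move=> k /negbTE ->; rewrite mulr0.
rewrite enum_rankK => /eqP; rewrite subr_eq0 => /eqP ->.
rewrite -(sum_enum (fun y => v ord0 (enum_rank y) * P y z)).
by apply: eq_bigr => k _; rewrite enum_valK.
Qed.

Lemma stat_dist_stationary P : stochastic P -> Y -> is_stationary P (stat_dist P).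
Proof.
move=> sP y0; apply: epsilon_spec.
have [x [[y xy] fx]] := stochastic_fix_exists sP y0.
set s := \sum_y `|x y|.
have s_gt0 : 0 < s.
  by rewrite /s (bigD1 y) //= ltr_pwDl ?normr_gt0 // sumr_ge0.
exists (fun y => `|x y| / s); split; [|split].
- by move=> u; rewrite divr_ge0 // ltW.
- by rewrite -mulr_suml divff // gt_eqF.
- move=> z; rewrite -(stochastic_fix_norm sP fx z) mulr_suml.
  by apply: eq_bigr => u _; rewrite mulrAC.
Qed.

(* [x := p - q] satisfies [x - x Q = p (P - Q)] and [\sum x = 0]. *)
Lemma stationary_fix_defect P Q p q : is_stationary P p -> is_stationary Q q ->
  fix_defect Q (fun y => p y - q y) <= \sum_(a : Y * Y) `|P a.1 a.2 - Q a.1 a.2|.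
Proof.
move=> [p0 [p1 pP]] [_ [q1 qQ]].
rewrite /fix_defect sumrB p1 q1 subrr normr0 addr0.
rewrite -(pair_big xpredT xpredT (fun y z => `|P y z - Q y z|)) /= exchange_big /=.
apply: ler_sum => z _.
have -> : p z - q z - \sum_y (p y - q y) * Q y z = \sum_y p y * (P y z - Q y z).
  rewrite -{1}pP -{1}qQ; under [in RHS]eq_bigr => y _ do rewrite mulrBr.
  rewrite sumrB; under [X in _ - _ - X]eq_bigr => y _ do rewrite mulrBl.
  rewrite sumrB; ring.
apply: le_trans (ler_norm_sum _ _ _) _; apply: ler_sum => y _.
rewrite normrM (ger0_norm (p0 y)) ler_piMl // -p1 (bigD1 y) //= lerDl.
exact: sumr_ge0.
Qed.

Lemma fix_defect_gt0 P x : stochastic P -> irreducible P ->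
  \sum_y `|x y| = 1 -> 0 < fix_defect P x.
Proof.
move=> sP iP x1; rewrite lt_def fix_defect_ge0 andbT; apply/eqP => /eqP.
rewrite paddr_eq0 ?sumr_ge0 // normr_eq0 => /andP[/eqP fix0 /eqP sum0].
have fx z : \sum_y x y * P y z = x z.
  apply/eqP; rewrite eq_sym -subr_eq0 -normr_eq0; apply/eqP.
  by apply: (psumr_eq0P _ fix0).
move: x1; rewrite big1 => [/eqP|y _]; first by rewrite eq_sym oner_eq0.
by rewrite (irreducible_fix_sum0 sP iP fx sum0) normr0.
Qed.

End StochasticMatrix.

Section InnerProductNorm.
Variables (R : realType) (d : nat) (ip : 'rV[R]_d -> 'rV[R]_d -> R).
Hypothesis ipP : inner_product ip.
Local Notation "`[ x ]" := (ipnorm ip x).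

Lemma ip0l y : ip 0 y = 0.
Proof.
case: ipP => _ [ipDl _]; apply: (@addrI _ (ip 0 y)).
by rewrite -ipDl !addr0.
Qed.

Lemma ipZr c x y : ip x (c *: y) = c * ip x y.
Proof. by case: ipP => ipC [_ [ipZl _]]; rewrite ipC ipZl ipC. Qed.

Lemma ipDr x y z : ip x (y + z) = ip x y + ip x z.
Proof. by case: ipP => ipC [ipDl _]; rewrite ipC ipDl !(ipC x). Qed.

Lemma ipxx_ge0 x : 0 <= ip x x.
Proof.
case: ipP => _ [_ [_ ipxx_gt0]].
by have [->|/ipxx_gt0/ltW//] := eqVneq x 0; rewrite ip0l.
Qed.

Lemma ipnorm_ge0 x : 0 <= `[x].
Proof. exact: sqrtr_ge0. Qed.

Lemma ipnorm0 : `[0] = 0.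
Proof. by rewrite /ipnorm ip0l sqrtr0. Qed.

Lemma ipnormZ c x : `[c *: x] = `|c| * `[x].
Proof.
case: ipP => _ [_ [ipZl _]].
by rewrite /ipnorm ipZl ipZr mulrA -expr2 sqrtrM ?sqr_ge0 // sqrtr_sqr.
Qed.

(* The quadratic [t |-> ip (x + t y) (x + t y)] is nonnegative. *)
Lemma cauchy_schwarz x y : ip x y ^+ 2 <= ip x x * ip y y.
Proof.
case: ipP => ipC [ipDl [ipZl _]].
have q t : 0 <= ip x x + 2 * t * ip x y + t ^+ 2 * ip y y.
  have := ipxx_ge0 (x + t *: y).
  by rewrite ipDl !ipDr !ipZl !ipZr (ipC y x); congr (0 <= _); ring.
set a := ip x x in q *; set b := ip x y in q *; set c := ip y y in q *.
have a_ge0 : 0 <= a := ipxx_ge0 x.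
have [c0|c_neq0] := eqVneq c 0.
  rewrite c0 mulr0; have [->|b_neq0] := eqVneq b 0; first by rewrite expr0n.
  have := q (- (a + 1) / (2 * b)); rewrite c0 mulr0 addr0.
  have -> : 2 * (- (a + 1) / (2 * b)) * b = - (a + 1) by field.
  lra.
have c_gt0 : 0 < c by rewrite lt_def c_neq0 ipxx_ge0.
have := q (- b / c).
have -> : a + 2 * (- b / c) * b + (- b / c) ^+ 2 * c = (a * c - b ^+ 2) / c by field.
by rewrite pmulr_lge0 ?invr_gt0 // subr_ge0 mulrC.
Qed.

Lemma ipnormD x y : `[x + y] <= `[x] + `[y].
Proof.
case: ipP => ipC [ipDl _].
rewrite -(ler_pXn2r (n := 2)) // ?nnegrE ?addr_ge0 ?ipnorm_ge0 //.
rewrite /ipnorm sqrrD !sqr_sqrtr ?ipxx_ge0 // ipDl !ipDr (ipC y x).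
have : ip x y <= Num.sqrt (ip x x) * Num.sqrt (ip y y).
  rewrite -sqrtrM ?ipxx_ge0 //; apply: le_trans (ler_norm _) _.
  by rewrite -sqrtr_sqr ler_wsqrtr ?cauchy_schwarz.
lra.
Qed.

Lemma ipnorm_sum (I : Type) (s : seq I) (F : I -> 'rV[R]_d) :
  `[\sum_(i <- s) F i] <= \sum_(i <- s) `[F i].
Proof.
elim: s => [|i s IHs]; first by rewrite !big_nil ipnorm0.
by rewrite !big_cons (le_trans (ipnormD _ _)) // lerD2l.
Qed.

(* Compare the two means through the mixed term [\sum_y p y *: G y]. *)
Lemma ipnorm_mean_sub (Y : finType) (p q : Y -> R) (F G : Y -> 'rV[R]_d) (a b : R) :
  (forall y, 0 <= p y) -> \sum_y p y = 1 ->
  (forall y, `[F y - G y] <= a) -> (forall y, `[G y] <= b) ->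
  `[\sum_y p y *: F y - \sum_y q y *: G y] <= a + (\sum_y `|p y - q y|) * b.
Proof.
move=> p_ge0 p1 FG Gb.
have -> : \sum_y p y *: F y - \sum_y q y *: G y =
    \sum_y p y *: (F y - G y) + \sum_y (p y - q y) *: G y.
  rewrite -big_split -sumrB; apply: eq_bigr => y _ /=.
  by rewrite scalerBr scalerBl addrA subrK.
apply: le_trans (ipnormD _ _) _; apply: lerD.
  apply: le_trans (ipnorm_sum _ _) _; rewrite -[a]mul1r -p1 mulr_suml.
  by apply: ler_sum => y _; rewrite ipnormZ ger0_norm // ler_wpM2l.
apply: le_trans (ipnorm_sum _ _) _; rewrite mulr_suml.
by apply: ler_sum => y _; rewrite ipnormZ ler_wpM2l.
Qed.

End InnerProductNorm.

Section FiniteDimensionalTopology.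
Local Open Scope classical_set_scope.
Variable R : realType.

Section ContinuousAlgebra.
Variable T : topologicalType.
Implicit Types f g : T -> R.

Lemma continuous_add f g : continuous f -> continuous g -> continuous (fun v => f v + g v).
Proof. by move=> cf cg v; exact: continuousD (cf v) (cg v). Qed.

Lemma continuous_sub f g : continuous f -> continuous g -> continuous (fun v => f v - g v).
Proof. by move=> cf cg v; exact: continuousD (cf v) (continuousN (cg v)). Qed.

Lemma continuous_mul f g : continuous f -> continuous g -> continuous (fun v => f v * g v).
Proof. by move=> cf cg v; exact: continuousM (cf v) (cg v). Qed.

Lemma continuous_norm f : continuous f -> continuous (fun v => `|f v|).
Proof. by move=> cf v; apply: continuous_comp; [exact: cf | exact: norm_continuous]. Qed.

Lemma continuous_sum (I : Type) (s : seq I) (F : I -> T -> R) :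
  (forall i, continuous (F i)) -> continuous (fun v => \sum_(i <- s) F i v).
Proof.
move=> cF; elim: s => [|i s IHs] v.
  by under eq_fun do rewrite big_nil; exact: cst_continuous.
by under eq_fun do rewrite big_cons; exact: continuousD (cF i v) (IHs v).
Qed.

Lemma closure_preimage (D : set R) (g : T -> R) (S : set T) :
  closed D -> continuous g -> (forall v, S v -> D (g v)) ->
  forall v, closure S v -> D (g v).
Proof.
move=> cD cg SD v; rewrite closureE => /(_ (g @^-1` D)); apply; split => //.
exact: (continuous_closedP g).1.
Qed.

Lemma closure_preimage_eq (g : T -> R) (c : R) (S : set T) :
  continuous g -> (forall v, S v -> g v = c) -> forall v, closure S v -> g v = c.
Proof. exact: closure_preimage (@closed_eq R c). Qed.

Lemma closure_preimage_ge (g : T -> R) (c : R) (S : set T) :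
  continuous g -> (forall v, S v -> c <= g v) -> forall v, closure S v -> c <= g v.
Proof. exact: closure_preimage (@closed_ge R c). Qed.

End ContinuousAlgebra.

Lemma continuous_coord_ball n (g : 'rV[R]_n -> R) :
  (forall (p : 'rV[R]_n) (e : R), 0 < e -> exists2 d : R, 0 < d &
     forall q : 'rV[R]_n, (forall i, `|p ord0 i - q ord0 i| < d) -> `|g p - g q| < e) ->
  continuous g.
Proof.
move=> gP p B /nbhs_ballP [e e_gt0 eB]; have [d d_gt0 dP] := gP p e e_gt0.
exists (fun i j => ball (p i j) d) => [i j|q pq]; first exact: nbhsx_ballx.
by apply/eB/dP => i; exact: pq ord0 i.
Qed.

Lemma closure_coord_approx n (S : set 'rV[R]_n) p e : closure S p -> 0 < e ->
  exists2 u, S u & forall i, `|p ord0 i - u ord0 i| < e.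
Proof.
move=> Sp e_gt0.
have [u [Su pu]] : S `&` [set u | forall i, `|p ord0 i - u ord0 i| < e] !=set0.
  apply: Sp; exists (fun i j => ball (p i j) e) => [i j|u pu i]; first exact: nbhsx_ballx.
  exact: pu ord0 i.
by exists u.
Qed.

Lemma compact_closure_unit_box n (S : set 'rV[R]_n) :
  (forall v, S v -> forall i, `|v ord0 i| <= 1) -> compact (closure S).
Proof.
move=> S_box.
have box := @rV_compact R n (fun=> `[-1, 1]%classic) (fun=> @segment_compact R (-1) 1).
apply: subclosed_compact box _; first exact: closed_closure.
move=> p Sp i /=; rewrite in_itv /= -ler_norml.
apply/ler_addgt0Pr => e e_gt0.
have [u Su pu] := closure_coord_approx Sp e_gt0.
rewrite -(subrK (u ord0 i) (p ord0 i)); apply: le_trans (ler_normD _ _) _.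
by rewrite addrC lerD ?S_box // ltW.
Qed.

Lemma normr_le_l1 (I : finType) (x : I -> R) i : `|x i| <= \sum_j `|x j|.
Proof. by rewrite (bigD1 i) //= lerDl sumr_ge0. Qed.

Definition rV_of_fun {I : finType} (x : I -> R) : 'rV[R]_#|I| := \row_j x (enum_val j).

Definition fun_of_rV {I : finType} (v : 'rV[R]_#|I|) (i : I) : R := v ord0 (enum_rank i).

Lemma rV_of_funK (I : finType) : cancel (@rV_of_fun I) (@fun_of_rV I).
Proof. by move=> x; apply: funext => i; rewrite /fun_of_rV mxE enum_rankK. Qed.

Lemma continuous_fun_of_rV (I : finType) (i : I) : continuous (fun v => @fun_of_rV I v i).
Proof. exact: coord_continuous. Qed.

Lemma bounded_away_from0 (I : finType) (S : set (I -> R)) (f : (I -> R) -> R) :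
  S !=set0 -> (forall x, S x -> forall i, `|x i| <= 1) ->
  continuous (f \o @fun_of_rV I) ->
  (forall v, closure (@rV_of_fun I @` S) v -> 0 < f (@fun_of_rV I v)) ->
  exists2 c, 0 < c & forall x, S x -> c <= f x.
Proof.
move=> [x0 Sx0] S_box cf f_gt0.
have box v : (rV_of_fun @` S) v -> forall j, `|v ord0 j| <= 1.
  by case=> x Sx <- j; rewrite mxE S_box.
have SI : closure (rV_of_fun @` S) !=set0.
  by exists (rV_of_fun x0); apply/subset_closure/imageP.
have [v /set_mem Sv vmin] :=
  compact_EVT_min SI (compact_closure_unit_box box) (continuous_subspaceT cf).
exists (f (fun_of_rV v)) => [|x Sx]; first exact: f_gt0.
by have := vmin _ (mem_set (subset_closure (imageP _ Sx))); rewrite /= rV_of_funK.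
Qed.

Lemma homogeneous_l1_lower_bound (I : finType) (g : (I -> R) -> R) (c : R) :
  (forall x, 0 <= g x) -> (forall k x, g (fun i => k * x i) = `|k| * g x) ->
  (forall x, \sum_i `|x i| = 1 -> c <= g x) ->
  forall x, c * \sum_i `|x i| <= g x.
Proof.
move=> g_ge0 gZ gc x; set s := \sum_i `|x i|.
have [->|s_neq0] := eqVneq s 0; first by rewrite mulr0.
have s_gt0 : 0 < s by rewrite lt_def s_neq0 sumr_ge0.
have := gc (fun i => s^-1 * x i).
rewrite gZ gtr0_norm ?invr_gt0 // ler_pdivlMl // mulrC; apply.
under eq_bigr do rewrite normrM gtr0_norm ?invr_gt0 //.
by rewrite -mulr_sumr mulVf.
Qed.

End FiniteDimensionalTopology.

Arguments rV_of_fun {R I}.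
Arguments fun_of_rV {R I}.

Section MatrixNorm.
Local Open Scope classical_set_scope.
Variables (R : realType) (Y : finType) (mn : ymat R Y -> R).
Hypothesis mnP : matrix_norm mn.
Implicit Types A B : ymat R Y.

Lemma matrix_norm_ge0 A : 0 <= mn A.
Proof. by case: mnP. Qed.

Lemma matrix_normZ c A : mn (fun y z => c * A y z) = `|c| * mn A.
Proof. by case: mnP => _ [_ []]. Qed.

Lemma matrix_normD A B : mn (fun y z => A y z + B y z) <= mn A + mn B.
Proof. by case: mnP => _ [_ []]. Qed.

Lemma matrix_norm0 : mn (fun _ _ => 0) = 0.
Proof. by have := matrix_normZ 0 (fun _ _ => 0); rewrite normr0 !mul0r. Qed.

Lemma matrix_norm_sum (I : Type) (s : seq I) (F : I -> ymat R Y) :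
  mn (fun y z => \sum_(i <- s) F i y z) <= \sum_(i <- s) mn (F i).
Proof.
elim: s => [|i s IHs].
  by under eq_fun do under eq_fun do rewrite big_nil; rewrite matrix_norm0 big_nil.
under eq_fun do under eq_fun do rewrite big_cons.
by rewrite big_cons (le_trans (matrix_normD _ _)) // lerD2l.
Qed.

Definition ymat_unit (p : Y * Y) : ymat R Y := fun y z => ((y, z) == p)%:R.

Lemma matrix_norm_le_l1 A : mn A <= \sum_(p : Y * Y) `|A p.1 p.2| * mn (ymat_unit p).
Proof.
have eA : A = fun y z => \sum_(p : Y * Y) A p.1 p.2 * ymat_unit p y z.
  apply: funext => y; apply: funext => z.
  rewrite (bigD1 (y, z)) //= /ymat_unit eqxx mulr1 big1 ?addr0 // => p.
  by rewrite eq_sym => /negbTE ->; rewrite mulr0.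
rewrite {1}eA; apply: le_trans (matrix_norm_sum _ _) _.
by apply: ler_sum => p _; rewrite matrix_normZ.
Qed.

Lemma matrix_norm_dist A B : `|mn A - mn B| <= mn (ysub A B).
Proof.
have tri A' B' : mn A' <= mn B' + mn (ysub A' B').
  have := matrix_normD B' (ysub A' B'); rewrite /ysub.
  by under eq_fun do under eq_fun do rewrite addrC subrK.
have sym : mn (ysub B A) = mn (ysub A B).
  have := matrix_normZ (-1) (ysub A B); rewrite normrN normr1 mul1r => <-.
  by congr mn; apply/funext => y; apply/funext => z; rewrite mulN1r opprB.
have := tri A B; have := tri B A; rewrite sym ler_norml => ? ?.
by apply/andP; split; lra.
Qed.

Lemma continuous_matrix_norm :
  continuous ((fun x : Y * Y -> R => mn (fun y z => x (y, z))) \o fun_of_rV).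
Proof.
apply: continuous_coord_ball => p e e_gt0.
set C := \sum_(q : Y * Y) mn (ymat_unit q).
have C_ge0 : 0 <= C by rewrite sumr_ge0 // => q _; exact: matrix_norm_ge0.
exists (e / (C + 1)) => [|q pq]; first by rewrite divr_gt0 // ltr_wpDl.
apply: le_lt_trans (matrix_norm_dist _ _) _.
apply: le_lt_trans (matrix_norm_le_l1 _) _.
apply: (@le_lt_trans _ _ (e / (C + 1) * C)).
  rewrite mulr_sumr; apply: ler_sum => r _.
  by rewrite ler_wpM2r ?matrix_norm_ge0 // ltW // /ysub pq.
by rewrite mulrAC ltr_pdivrMr ?ltr_wpDl // ltr_pM2l // ltrDl.
Qed.

Lemma l1_le_matrix_norm :
  exists2 K : R, 0 <= K & forall A, \sum_(p : Y * Y) `|A p.1 p.2| <= K * mn A.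
Proof.
have [q0 _|YY_empty] := pickP (@predT (Y * Y)%type); last first.
  by exists 0 => // A; rewrite mul0r big1 // => p; have := YY_empty p.
pose S : set (Y * Y -> R) := [set x | \sum_p `|x p| = 1].
have S_box x : S x -> forall p, `|x p| <= 1 by move=> Sx p; rewrite -Sx normr_le_l1.
have S_l1 : forall v, closure (rV_of_fun @` S) v -> \sum_p `|fun_of_rV v p| = 1.
  apply: closure_preimage_eq => [|_ [x Sx <-]]; last by rewrite rV_of_funK.
  by apply: continuous_sum => p; apply/continuous_norm/continuous_fun_of_rV.
have [c c_gt0 Sc] : exists2 c, 0 < c & forall x, S x -> c <= mn (fun y z => x (y, z)).
  apply: bounded_away_from0 => [|//||v /S_l1 v1].
  - exists (fun p => (p == q0)%:R); rewrite /S /= (bigD1 q0) //= eqxx normr1.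
    by rewrite big1 ?addr0 // => p /negbTE ->; rewrite normr0.
  - exact: continuous_matrix_norm.
  rewrite lt_def matrix_norm_ge0 andbT; apply: contra_eqN v1.
  case: mnP => _ [mn_eq0 _] /eqP /mn_eq0 v0.
  by rewrite big1 ?(@eq_sym _ 0) ?oner_eq0 // => -[y z] _; rewrite v0 normr0.
exists c^-1 => [|A]; first by rewrite invr_ge0 ltW.
rewrite ler_pdivlMl //.
apply: (@homogeneous_l1_lower_bound _ _ (fun x => mn (fun y z => x (y, z)))) => //.
- by move=> x; exact: matrix_norm_ge0.
- by move=> k x; exact: matrix_normZ.
Qed.

End MatrixNorm.

Section UniformFixDefect.
Local Open Scope classical_set_scope.
Variables (R : realType) (Y : finType) (V : Type) (Pw : V -> ymat R Y).
Hypothesis Pw_stochastic : forall w, stochastic (Pw w).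
Hypothesis closure_irreducible : forall P, in_closure Pw P -> irreducible P.

(* A pair [(P, x)] is encoded as one function on [option Y * Y], with [x] as the extra row [None]. *)
Definition augment (P : ymat R Y) (x : Y -> R) (a : option Y * Y) : R :=
  if a.1 is Some y then P y a.2 else x a.2.

Definition augmented_family : set (option Y * Y -> R) :=
  [set augment (Pw w) x | w in setT & x in [set x | \sum_y `|x y| = 1]].

Lemma closure_augmented_family v :
  closure (rV_of_fun @` augmented_family) v ->
  [/\ stochastic (fun y z => fun_of_rV v (Some y, z)),
      in_closure Pw (fun y z => fun_of_rV v (Some y, z)) &
      \sum_z `|fun_of_rV v (None, z)| = 1].
Proof.
move=> Av; split; first split.
- move=> y z; move: v Av; apply: closure_preimage_ge; first exact: continuous_fun_of_rV.
  by move=> _ [_ [w _ [x _ <-]] <-]; case: (Pw_stochastic w) => P0 _; rewrite rV_of_funK /= P0.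
- move=> y; move: v Av; apply: closure_preimage_eq.
    by apply: continuous_sum => z; exact: continuous_fun_of_rV.
  by move=> _ [_ [w _ [x _ <-]] <-]; case: (Pw_stochastic w) => _ P1; rewrite rV_of_funK /= P1.
- move=> e e_gt0; have [_ [_ [w _ [x _ <-]] <-] close] := closure_coord_approx Av e_gt0.
  exists w => y z; have := close (enum_rank (Some y, z)).
  by rewrite distrC mxE enum_rankK.
- move: v Av; apply: closure_preimage_eq.
    by apply: continuous_sum => z; apply/continuous_norm/continuous_fun_of_rV.
  by move=> _ [_ [w _ [x x1 <-]] <-]; rewrite rV_of_funK.
Qed.

Lemma continuous_augmented_fix_defect : continuous
  ((fun g : option Y * Y -> R => fix_defect (fun y z => g (Some y, z)) (fun z => g (None, z)))
     \o fun_of_rV).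
Proof.
rewrite /comp /fix_defect; apply: continuous_add.
  apply: continuous_sum => z; apply/continuous_norm/continuous_sub.
    exact: continuous_fun_of_rV.
  by apply: continuous_sum => y; apply: continuous_mul; exact: continuous_fun_of_rV.
by apply/continuous_norm/continuous_sum => y; exact: continuous_fun_of_rV.
Qed.

Lemma fix_defect_uniform_bound (w0 : V) :
  exists2 c : R, 0 < c & forall w x, c * \sum_y `|x y| <= fix_defect (Pw w) x.
Proof.
have [y0 _|Y0] := pickP (@predT Y); last first.
  by exists 1 => // w x; rewrite big1 ?mulr0 ?fix_defect_ge0 // => y; have := Y0 y.
have [c c_gt0 Ac] : exists2 c, 0 < c & forall g, augmented_family g ->
    c <= fix_defect (fun y z => g (Some y, z)) (fun z => g (None, z)).
  apply: bounded_away_from0 => [|||v /closure_augmented_family [sP clP x1]].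
  - pose e0 y : R := (y == y0)%:R; exists (augment (Pw w0) e0).
    exists w0 => //; exists e0 => //=.
    rewrite (bigD1 y0) //= /e0 eqxx normr1 big1 ?addr0 // => y /negbTE ->.
    exact: normr0.
  - move=> _ [w _ [x x1 <-]] [[y|] z]; rewrite /augment /=.
      by case: (Pw_stochastic w) => P0 _; rewrite ger0_norm ?stochastic_le1.
    by rewrite -x1; exact: normr_le_l1.
  - exact: continuous_augmented_fix_defect.
  exact: fix_defect_gt0 sP (closure_irreducible clP) x1.
exists c => // w; apply: homogeneous_l1_lower_bound => [x|k x|x x1].
- exact: fix_defect_ge0.
- exact: fix_defectZ.
by apply: (Ac (augment (Pw w) x)); exists w => //; exists x.
Qed.

End UniformFixDefect.

Lemma stat_dist_l1_lipschitz (R : realType) (Y : finType) (V : Type)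
    (Pw : V -> ymat R Y) (mn : ymat R Y -> R) :
  matrix_norm mn -> (forall w, stochastic (Pw w)) ->
  (forall P, in_closure Pw P -> irreducible P) -> V -> Y ->
  exists2 k : R, 0 <= k & forall w1 w2,
    \sum_y `|stat_dist (Pw w1) y - stat_dist (Pw w2) y| <= k * mn (ysub (Pw w1) (Pw w2)).
Proof.
move=> mnP sPw clP w0 y0.
have [c c_gt0 cP] := fix_defect_uniform_bound sPw clP w0.
have [K K_ge0 KP] := l1_le_matrix_norm mnP.
exists (K / c) => [|w1 w2]; first by rewrite divr_ge0 // ltW.
rewrite mulrAC ler_pdivlMr // mulrC; apply: le_trans (cP w2 _) _.
apply: le_trans (KP _).
exact: stationary_fix_defect (stat_dist_stationary (sPw w1) y0) (stat_dist_stationary (sPw w2) y0).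
Qed.

(* The damping factor [1 / (1 + a1 + a2)] of (P) absorbs the linear growth [1 + a2] of [H]. *)
Lemma damped_growth_le (R : realFieldType) (C L k n a1 a2 s : R) :
  s <= k * (C / (1 + a1 + a2) * n) ->
  0 <= L -> 0 <= k -> 0 <= n -> 0 <= a1 -> 0 <= a2 ->
  s * (L * (1 + a2)) <= k * `|C| * L * n.
Proof.
move=> sk L_ge0 k_ge0 n_ge0 a1_ge0 a2_ge0.
have t_gt0 : 0 < 1 + a1 + a2 by lra.
have damp : C / (1 + a1 + a2) * (1 + a2) <= `|C|.
  have f_ge0 : 0 <= (1 + a2) / (1 + a1 + a2) by rewrite divr_ge0 ?ltW //; lra.
  have f_le1 : (1 + a2) / (1 + a1 + a2) <= 1 by rewrite ler_pdivrMr // mul1r; lra.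
  rewrite mulrAC -mulrA; apply: le_trans (ler_norm _) _.
  by rewrite normrM (ger0_norm f_ge0) ler_piMr.
have : s * (1 + a2) <= k * n * `|C|.
  apply: le_trans (ler_wpM2l (mulr_ge0 k_ge0 n_ge0) damp).
  have -> : k * n * (C / (1 + a1 + a2) * (1 + a2)) =
    k * (C / (1 + a1 + a2) * n) * (1 + a2) by ring.
  by apply: ler_wpM2r sk; lra.
move/(ler_wpM2l L_ge0); lra.
Qed.

Theorem mainTheorem11 (R : realType) (d : nat) (Y : finType)
  (ip : 'rV[R]_d -> 'rV[R]_d -> R)
  (H : 'rV[R]_d -> Y -> 'rV[R]_d)
  (Pw : 'rV[R]_d -> ymat R Y)
  (mn : ymat R Y -> R) :
  inner_product ip ->
  (* (M) *)
  (forall w, stochastic (Pw w)) ->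
  (forall P : ymat R Y, in_closure Pw P -> irreducible P /\ aperiodic P) ->
  (* (P) *)
  matrix_norm mn ->
  (exists C_P : R, forall w1 w2,
      mn (ysub (Pw w1) (Pw w2))
        <= C_P / (1 + ipnorm ip w1 + ipnorm ip w2) * ipnorm ip (w1 - w2)) ->
  (* (L) *)
  (exists L_h : R, forall w1 w2 y,
      ipnorm ip (H w1 y - H w2 y) <= L_h * ipnorm ip (w1 - w2) /\
      ipnorm ip (H 0 y) <= L_h) ->
  exists L_h' : R, forall w1 w2,
    ipnorm ip (hmean Pw H w1 - hmean Pw H w2) <= L_h' * ipnorm ip (w1 - w2).
Proof.
move=> ipP sPw clP mnP [C CP] [L HL].
have [y0 _|Y0] := pickP (@predT Y); last first.
  by exists 0 => w1 w2; rewrite /hmean !big_pred0 // subrr ipnorm0 ?mul0r.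
have [k k_ge0 kP] := stat_dist_l1_lipschitz mnP sPw (fun P cl => (clP P cl).1) 0 y0.
have L_ge0 : 0 <= L := le_trans (ipnorm_ge0 _ _) (HL 0 0 y0).2.
exists (L + k * `|C| * L) => w1 w2.
have H_growth y : ipnorm ip (H w2 y) <= L * (1 + ipnorm ip w2).
  have := ipnormD ipP (H w2 y - H 0 y) (H 0 y); rewrite subrK => /le_trans; apply.
  rewrite mulrDr mulr1 addrC lerD ?(HL 0 0 y).2 //.
  by have := (HL w2 0 y).1; rewrite subr0.
have [d1_ge0 [d1_sum _]] := stat_dist_stationary (sPw w1) y0.
have HL12 y := (HL w1 w2 y).1.
rewrite /hmean; apply: le_trans
  (ipnorm_mean_sub ipP (stat_dist (Pw w2)) d1_ge0 d1_sum HL12 H_growth) _.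
rewrite mulrDl lerD2l.
have d12 := le_trans (kP w1 w2) (ler_wpM2l k_ge0 (CP w1 w2)).
by apply: (damped_growth_le d12); rewrite ?ipnorm_ge0.
Qed.
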